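(* Let $(W,S)$ be a Coxeter system, $w\in W\setminus\{1\}$ and $k\in I$ with $k\notin D_R(w)$. If $D_R(ws_k)=\{k\}$, then $$\mathrm{Annex}(ws_k)=\mathrm{Annex}(w)\cdot W_{I\setminus\{k\}}=\{xy: x\in\mathrm{Annex}(w),\ y\in W_{I\setminus\{k\}}\}.$$
   Context: $(W,S)$ a Coxeter system with $S=\{s_i:i\in I\}$; $\ell$ the length; $\le$ the Bruhat order; $D_R(w)=\{i\in I:\ell(ws_i)<\ell(w)\}$ is the right descent set; $W_{J}=\langle s_i:i\in J\rangle$ for $J\subseteq I$. $\mathrm{Annex}(w)=\{y\in W: w\not\le y\}$. *)

From Stdlib Require Import List Arith Relations ClassicalEpsilon.
Import ListNotations.

Record Group := {
  gcar :> Type;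
  gmul : gcar -> gcar -> gcar;
  gone : gcar;
  ginv : gcar -> gcar;
  gmulA : forall x y z, gmul x (gmul y z) = gmul (gmul x y) z;
  gmul1l : forall x, gmul gone x = x;
  gmulVl : forall x, gmul (ginv x) x = gone
}.
Arguments gmul {g}.
Arguments gone {g}.
Arguments ginv {g}.

Fixpoint gpow {G : Group} (x : G) (n : nat) : G :=
  match n with O => gone | S n => gmul x (gpow x n) end.

Definition is_hom {G H : Group} (f : G -> H) : Prop :=
  forall x y, f (gmul x y) = gmul (f x) (f y).

(* Coxeter matrix over index type I; m i j = 0 encodes m(i,j) = infinity. *)
Definition coxeter_matrix {I : Type} (m : I -> I -> nat) : Prop :=
  (forall i, m i i = 1) /\ (forall i j, m i j = m j i) /\
  (forall i j, i <> j -> m i j <> 1).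

Definition coxeter_relations {I : Type} (m : I -> I -> nat) {G : Group} (f : I -> G) : Prop :=
  forall i j, m i j <> 0 -> gpow (gmul (f i) (f j)) (m i j) = gone.

(* (W, {s_i}) is a Coxeter system: W has the Coxeter presentation with generators s_i,
   i.e. s satisfies the relations and has the universal property of the presented group. *)
Definition is_coxeter_system (W : Group) (I : Type) (s : I -> W) : Prop :=
  exists m : I -> I -> nat, coxeter_matrix m /\ coxeter_relations m s /\
    forall (G : Group) (f : I -> G), coxeter_relations m f ->
      exists! phi : W -> G, is_hom phi /\ forall i, phi (s i) = f i.

Section Coxeter.
Context {W : Group} {I : Type} (s : I -> W).

Definition word_eval (l : list I) : W := fold_right (fun i x => gmul (s i) x) gone l.

Definition is_length (w : W) (n : nat) : Prop :=
  (exists l, length l = n /\ word_eval l = w) /\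
  (forall l, word_eval l = w -> n <= length l).

Definition coxlen (w : W) : nat := epsilon (inhabits 0) (is_length w).

Definition reflection (t : W) : Prop := exists x i, t = gmul (gmul x (s i)) (ginv x).

Definition bruhat_step (u v : W) : Prop :=
  exists t, reflection t /\ v = gmul u t /\ coxlen u < coxlen v.
Definition bruhat_le (u v : W) : Prop := clos_refl_trans W bruhat_step u v.

Definition in_DR (w : W) (i : I) : Prop := coxlen (gmul w (s i)) < coxlen w.

Definition Annex (w : W) (y : W) : Prop := ~ bruhat_le w y.

Inductive parabolic (J : I -> Prop) : W -> Prop :=
| par_one : parabolic J gone
| par_gen j : J j -> parabolic J (s j)
| par_mul x y : parabolic J x -> parabolic J y -> parabolic J (gmul x y)
| par_inv x : parabolic J x -> parabolic J (ginv x).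

End Coxeter.

From Stdlib Require Import List Arith Relations ClassicalEpsilon Classical Lia Bool
  FunctionalExtensionality Wf_nat.
Import ListNotations.

(* Write J = I \ {k}, v = w s_k, and factor any y as y = x z with z in W_J and x
   without right descents in J.  Since v has no right descent in J, v <= x z forces
   v <= x; as w <= v this gives the inclusion Annex(w) W_J in Annex(v).  Conversely,
   if w <= x for such an x, then x <> 1, so k is a descent of x and the lifting
   property (w < w s_k, x s_k < x) yields v <= x <= y.
   Generation by S, the parity of the length and the strong exchange condition come
   from the universal property of the presentation, the last one through Tits' action
   of W on W x Z/2, s_i . (x, e) = (s_i x s_i, e + [x = s_i]); the lifting property
   then follows by induction along Bruhat chains. *)

Arguments gmulA {g} x y z.
Arguments gmul1l {g} x.
Arguments gmulVl {g} x.

Section GroupTheory.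
Context {G : Group}.
Implicit Types x y z a b : G.

Lemma idemg x : gmul x x = x -> x = gone.
Proof.
  intros H. rewrite <- (gmul1l x), <- (gmulVl x) at 1.
  rewrite <- gmulA, H. apply gmulVl.
Qed.

Lemma mulgV x : gmul x (ginv x) = gone.
Proof.
  apply idemg. rewrite <- gmulA, (gmulA (ginv x) x), gmulVl, gmul1l. reflexivity.
Qed.

Lemma mulg1 x : gmul x gone = x.
Proof. rewrite <- (gmulVl x), gmulA, mulgV, gmul1l. reflexivity. Qed.

Lemma mulKg x y : gmul (ginv x) (gmul x y) = y.
Proof. rewrite gmulA, gmulVl, gmul1l. reflexivity. Qed.

Lemma mulgK x y : gmul (gmul y x) (ginv x) = y.
Proof. rewrite <- gmulA, mulgV, mulg1. reflexivity. Qed.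

Lemma invg_unique x y : gmul x y = gone -> ginv x = y.
Proof. intros H. rewrite <- (mulKg x y), H, mulg1. reflexivity. Qed.

Lemma invgK x : ginv (ginv x) = x.
Proof. apply invg_unique, gmulVl. Qed.

Lemma invMg x y : ginv (gmul x y) = gmul (ginv y) (ginv x).
Proof.
  apply invg_unique. rewrite <- gmulA, (gmulA y), mulgV, gmul1l, mulgV. reflexivity.
Qed.

Lemma invg1 : ginv (@gone G) = gone.
Proof. apply invg_unique, gmul1l. Qed.

Lemma conjg_eq a b x y : gmul a b = gone ->
  (gmul (gmul a x) b = y <-> x = gmul (gmul b y) a).
Proof.
  intros Hab. assert (Hba : gmul b a = gone).
  { apply invg_unique in Hab. subst b. apply gmulVl. }
  split; intros E; subst.
  - rewrite !gmulA, Hba, gmul1l, <- gmulA, Hba, mulg1. reflexivity.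
  - rewrite !gmulA, Hab, gmul1l, <- gmulA, Hab, mulg1. reflexivity.
Qed.

Lemma gpowSr x n : gpow x (S n) = gmul (gpow x n) x.
Proof.
  induction n as [|n IH]; simpl.
  - rewrite gmul1l, mulg1. reflexivity.
  - simpl in IH. rewrite IH at 1. apply gmulA.
Qed.

Lemma gpowD x n p : gpow x (n + p) = gmul (gpow x n) (gpow x p).
Proof.
  induction n as [|n IH]; simpl.
  - rewrite gmul1l. reflexivity.
  - rewrite IH, gmulA. reflexivity.
Qed.

End GroupTheory.

Lemma hom1 {G H : Group} (f : G -> H) : is_hom f -> f gone = gone.
Proof. intros Hf. apply idemg. rewrite <- Hf, gmul1l. reflexivity. Qed.

Section Subgroup.
Context {G : Group} (P : G -> Prop).
Hypotheses (P1 : P gone) (PM : forall x y, P x -> P y -> P (gmul x y))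
  (PV : forall x, P x -> P (ginv x)).

Lemma val_inj (a b : {x | P x}) : proj1_sig a = proj1_sig b -> a = b.
Proof. apply eq_sig_hprop. intros; apply proof_irrelevance. Qed.

Definition Subgroup : Group.
Proof.
  refine {| gcar := {x | P x};
            gmul a b := exist _ (gmul (proj1_sig a) (proj1_sig b))
                          (PM _ _ (proj2_sig a) (proj2_sig b));
            gone := exist _ gone P1;
            ginv a := exist _ (ginv (proj1_sig a)) (PV _ (proj2_sig a)) |};
    intros; apply val_inj; simpl.
  - apply gmulA.
  - apply gmul1l.
  - apply gmulVl.
Defined.

Lemma val_gpow (a : Subgroup) n : proj1_sig (gpow a n) = gpow (proj1_sig a) n.
Proof. induction n as [|n IH]; simpl; [|rewrite IH]; reflexivity. Qed.

End Subgroup.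

Record Perm (X : Type) := MkPerm {
  perm_fun : X -> X;
  perm_inv : X -> X;
  perm_funK : forall r, perm_fun (perm_inv r) = r;
  perm_invK : forall r, perm_inv (perm_fun r) = r }.
Arguments MkPerm {X}.
Arguments perm_fun {X}.
Arguments perm_inv {X}.
Arguments perm_funK {X}.
Arguments perm_invK {X}.

Lemma perm_ext {X} (p q : Perm X) : perm_fun p = perm_fun q -> p = q.
Proof.
  destruct p as [f g fK gK], q as [f' g' fK' gK']; simpl; intros <-.
  assert (g = g') as <-.
  { apply functional_extensionality. intros r. rewrite <- (fK' r) at 1. apply gK. }
  f_equal; apply proof_irrelevance.
Qed.

Definition perm_mul {X} (p q : Perm X) : Perm X.
Proof.
  refine (MkPerm (fun r => perm_fun p (perm_fun q r)) (fun r => perm_inv q (perm_inv p r)) _ _);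
    intros r.
  - rewrite (perm_funK q), (perm_funK p). reflexivity.
  - rewrite (perm_invK p), (perm_invK q). reflexivity.
Defined.

Definition PermG (X : Type) : Group.
Proof.
  refine {| gcar := Perm X; gmul := perm_mul;
            gone := MkPerm (fun r => r) (fun r => r) (fun r => eq_refl) (fun r => eq_refl);
            ginv p := MkPerm (perm_inv p) (perm_fun p) (perm_invK p) (perm_funK p) |}.
  - intros; apply perm_ext; reflexivity.
  - intros; apply perm_ext; reflexivity.
  - intros; apply perm_ext, functional_extensionality; intros r; apply perm_invK.
Defined.

Definition involution_perm {X} (f : X -> X) (fK : forall r, f (f r) = r) : PermG X :=
  MkPerm f f fK fK.

Definition XorGroup : Group.
Proof.
  refine {| gcar := bool; gmul := xorb; gone := false; ginv b := b |}.
  - intros [] [] []; reflexivity.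
  - reflexivity.
  - intros []; reflexivity.
Defined.

Definition dec (P : Prop) : bool := if excluded_middle_informative P then true else false.

Lemma dec_spec (P : Prop) : dec P = true <-> P.
Proof. unfold dec; destruct excluded_middle_informative; intuition discriminate. Qed.

Lemma dec_iff (P Q : Prop) : (P <-> Q) -> dec P = dec Q.
Proof. intros H. unfold dec; do 2 destruct excluded_middle_informative; tauto. Qed.

Section Coxeter.
Variables (W : Group) (I : Type) (s : I -> W) (m : I -> I -> nat).
Hypothesis m_diag : forall i, m i i = 1.
Hypothesis s_relations : coxeter_relations m s.
Hypothesis s_universal : forall (G : Group) (f : I -> G), coxeter_relations m f ->
  exists! phi : W -> G, is_hom phi /\ forall i, phi (s i) = f i.

Notation ev := (word_eval s).
Notation len := (coxlen s).
Notation ble := (bruhat_le s).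

Lemma s_sq i : gmul (s i) (s i) = gone.
Proof.
  pose proof (s_relations i i) as H. rewrite m_diag in H. simpl in H.
  rewrite mulg1 in H. apply H. discriminate.
Qed.

Lemma s_inv i : ginv (s i) = s i.
Proof. apply invg_unique, s_sq. Qed.

Lemma mulgss i y : gmul (gmul y (s i)) (s i) = y.
Proof. rewrite <- gmulA, s_sq, mulg1. reflexivity. Qed.

Lemma mulssg i y : gmul (s i) (gmul (s i) y) = y.
Proof. rewrite gmulA, s_sq, gmul1l. reflexivity. Qed.

Lemma ev_app l1 l2 : ev (l1 ++ l2) = gmul (ev l1) (ev l2).
Proof.
  induction l1 as [|i l1 IH]; simpl.
  - rewrite gmul1l. reflexivity.
  - rewrite IH, gmulA. reflexivity.
Qed.

Lemma ev_rcons l i : ev (l ++ [i]) = gmul (ev l) (s i).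
Proof. rewrite ev_app. simpl. rewrite mulg1. reflexivity. Qed.

Lemma ev_rev l : ev (rev l) = ginv (ev l).
Proof.
  induction l as [|i l IH]; simpl.
  - symmetry; apply invg1.
  - rewrite ev_rcons, IH, invMg, s_inv. reflexivity.
Qed.

Lemma words_generate w : exists l, ev l = w.
Proof.
  set (P x := exists l, ev l = x).
  assert (P1 : P gone) by (exists []; reflexivity).
  assert (PM : forall x y, P x -> P y -> P (gmul x y)).
  { intros x y [l1 <-] [l2 <-]. exists (l1 ++ l2). apply ev_app. }
  assert (PV : forall x, P x -> P (ginv x)).
  { intros x [l <-]. exists (rev l). apply ev_rev. }
  assert (Ps : forall i, P (s i)) by (intros i; exists [i]; apply mulg1).
  set (f i := exist P (s i) (Ps i) : Subgroup P P1 PM PV).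
  assert (Hf : coxeter_relations m f).
  { intros i j Hij. apply val_inj. rewrite val_gpow. apply s_relations, Hij. }
  destruct (s_universal _ f Hf) as [phi [[phi_hom phi_s] _]].
  destruct (s_universal W s s_relations) as [phi0 [_ phi0_unique]].
  assert (Hval : (fun x => proj1_sig (phi x)) = fun x => x).
  { transitivity phi0; [symmetry|]; apply phi0_unique; split.
    - intros x y. rewrite phi_hom. reflexivity.
    - intros i. rewrite phi_s. reflexivity.
    - intros x y. reflexivity.
    - intros i. reflexivity. }
  change (P ((fun x : W => x) w)). rewrite <- Hval. apply proj2_sig.
Qed.

Lemma len_spec w : is_length s w (len w).
Proof.
  unfold coxlen. apply epsilon_spec.
  destruct (dec_inh_nat_subset_has_unique_least_element
              (fun n => exists l, length l = n /\ ev l = w)) as [n [[[l Hl] Hmin] _]].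
  - intros n. apply classic.
  - destruct (words_generate w) as [l Hl]. exists (length l), l. auto.
  - exists n. split; [exists l; exact Hl|].
    intros l' Hl'. apply Hmin. exists l'. auto.
Qed.

Lemma len_word_le l : len (ev l) <= length l.
Proof. exact (proj2 (len_spec (ev l)) l eq_refl). Qed.

Lemma reduced_word w : exists l, length l = len w /\ ev l = w.
Proof. apply (proj1 (len_spec w)). Qed.

Lemma len_mul_s_le w i : len (gmul w (s i)) <= S (len w).
Proof.
  destruct (reduced_word w) as [l [Hl <-]]. rewrite <- ev_rcons.
  etransitivity; [apply len_word_le|]. rewrite length_app; simpl; lia.
Qed.

Lemma len1 : len gone = 0.
Proof. pose proof (len_word_le []). simpl in H. lia. Qed.

Lemma len_eq0 w : len w = 0 -> w = gone.
Proof.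
  intros H. destruct (reduced_word w) as [[|i l] [Hl <-]]; [reflexivity|].
  rewrite H in Hl. discriminate.
Qed.

(* The sign character s_i |-> 1 of Z/2 shows that len w and len (w s_i) differ in parity. *)
Lemma len_mul_s_neq w i : len (gmul w (s i)) <> len w.
Proof.
  assert (Hf : coxeter_relations m (fun _ => (true : XorGroup))).
  { intros a b _. induction (m a b) as [|n IH]; simpl in *; [reflexivity|exact IH]. }
  destruct (s_universal _ _ Hf) as [sgn [[sgn_hom sgn_s] _]].
  assert (sgn_ev : forall l, sgn (ev l) = Nat.odd (length l)).
  { induction l as [|j l IH]; simpl.
    - apply (hom1 sgn sgn_hom).
    - rewrite sgn_hom, sgn_s, IH, Nat.odd_succ, <- Nat.negb_odd. reflexivity. }
  intros E.
  destruct (reduced_word w) as [l1 [H1 H2]].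
  destruct (reduced_word (gmul w (s i))) as [l2 [H3 H4]].
  pose proof (sgn_ev l2) as A. rewrite H4, sgn_hom, sgn_s, <- H2, sgn_ev, H3, E, <- H1 in A.
  simpl in A. destruct (Nat.odd (length l1)); discriminate.
Qed.

Lemma len_mul_s w i : len (gmul w (s i)) = S (len w) \/ S (len (gmul w (s i))) = len w.
Proof.
  pose proof (len_mul_s_neq w i). pose proof (len_mul_s_le w i).
  pose proof (len_mul_s_le (gmul w (s i)) i). rewrite mulgss in *. lia.
Qed.

Lemma reflection_s i : reflection s (s i).
Proof. exists gone, i. rewrite invg1, gmul1l, mulg1. reflexivity. Qed.

Lemma reflection_conj_s t i : reflection s t -> reflection s (gmul (gmul (s i) t) (s i)).
Proof.
  intros [x [j ->]]. exists (gmul (s i) x), j. rewrite invMg, s_inv, !gmulA. reflexivity.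
Qed.

Lemma reflection_sq t : reflection s t -> gmul t t = gone.
Proof.
  intros [x [i ->]].
  rewrite <- !gmulA, (gmulA (ginv x) x), gmulVl, gmul1l, mulssg, mulgV. reflexivity.
Qed.

Lemma ble_refl x : ble x x.
Proof. apply rt_refl. Qed.

Lemma ble_trans x y z : ble x y -> ble y z -> ble x z.
Proof. apply rt_trans. Qed.

Lemma ble_step x t : reflection s t -> len x < len (gmul x t) -> ble x (gmul x t).
Proof. intros. apply rt_step. exists t. auto. Qed.

Lemma ble_mul_s x i : len x < len (gmul x (s i)) -> ble x (gmul x (s i)).
Proof. apply ble_step, reflection_s. Qed.

Lemma ble_mul_s_desc x i : len (gmul x (s i)) < len x -> ble (gmul x (s i)) x.
Proof.
  intros H. rewrite <- (mulgss i x) at 2. apply ble_mul_s. rewrite mulgss. exact H.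
Qed.

Lemma ble_len x y : ble x y -> len x <= len y.
Proof. induction 1 as [x y [t [_ [-> H]]]| |]; lia. Qed.

Lemma ble1 x : ble x gone -> x = gone.
Proof. intros H. apply ble_len in H. rewrite len1 in H. apply len_eq0. lia. Qed.

Definition rho_s (i : I) (r : W * bool) : W * bool :=
  (gmul (gmul (s i) (fst r)) (s i), xorb (snd r) (dec (fst r = s i))).

Lemma rho_sK i r : rho_s i (rho_s i r) = r.
Proof.
  destruct r as [x e]. unfold rho_s; simpl.
  assert (Hx : gmul (gmul (s i) x) (s i) = s i <-> x = s i).
  { rewrite (conjg_eq _ _ _ _ (s_sq i)), s_sq, gmul1l. reflexivity. }
  rewrite (dec_iff _ _ Hx), !gmulA, mulgss, s_sq, gmul1l.
  destruct e, (dec (x = s i)); reflexivity.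
Qed.

Definition rho_gen (i : I) : PermG (W * bool) := involution_perm (rho_s i) (rho_sK i).

Section Dihedral.
Variables i j : I.
Let a := s i.
Let b := s j.
Let d := gmul a b.
Let c := gmul b a.

(* The reflections of the dihedral subgroup, read along (s_i s_j)^n:
   b, bab, babab, ... *)
Let refl_at r := gmul (gpow c r) b.

Fixpoint dihedral_parity (x : W) (n : nat) : bool :=
  match n with
  | 0 => false
  | S n => xorb (dihedral_parity x n) (dec (x = refl_at n))
  end.

Lemma mul_ab_ba : gmul d c = gone.
Proof. unfold c, d, a, b. rewrite <- gmulA, mulssg, s_sq. reflexivity. Qed.

Lemma gpow_ab_ba n : gmul (gpow d n) (gpow c n) = gone.
Proof.
  induction n as [|n IH]; [apply gmul1l|]. rewrite (gpowSr c n). simpl.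
  rewrite <- gmulA, (gmulA (gpow d n)), IH, gmul1l. apply mul_ab_ba.
Qed.

Lemma mul_b_gpow_ab n : gmul b (gpow d n) = gmul (gpow c n) b.
Proof.
  induction n as [|n IH]; simpl.
  - rewrite gmul1l, mulg1. reflexivity.
  - assert (bd : gmul b d = gmul c b) by apply gmulA.
    rewrite (gmulA b d), bd, <- gmulA, IH, gmulA. reflexivity.
Qed.

Lemma rho_gen_gpow n x e :
  perm_fun (gpow (gmul (rho_gen i) (rho_gen j)) n) (x, e) =
  (gmul (gmul (gpow d n) x) (gpow c n), xorb e (dihedral_parity x (2 * n))).
Proof.
  induction n as [|n IH].
  - simpl. rewrite gmul1l, mulg1, xorb_false_r. reflexivity.
  - change (perm_fun (gpow (gmul (rho_gen i) (rho_gen j)) (S n)) (x, e)) with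
      (rho_s i (rho_s j (perm_fun (gpow (gmul (rho_gen i) (rho_gen j)) n) (x, e)))).
    rewrite IH. cbv [rho_s fst snd].
    replace (2 * S n) with (S (S (2 * n))) by lia.
    change (dihedral_parity x (S (S (2 * n)))) with
      (xorb (xorb (dihedral_parity x (2 * n)) (dec (x = refl_at (2 * n))))
         (dec (x = refl_at (S (2 * n))))).
    f_equal.
    + rewrite (gpowSr c n). simpl. unfold d, c, a, b. rewrite !gmulA. reflexivity.
    + set (y := gmul (gmul (gpow d n) x) (gpow c n)).
      assert (E1 : dec (y = s j) = dec (x = refl_at (2 * n))).
      { apply dec_iff. unfold y. rewrite (conjg_eq _ _ x (s j) (gpow_ab_ba n)).
        unfold refl_at. rewrite <- gmulA, mul_b_gpow_ab, gmulA, <- gpowD.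
        replace (n + n) with (2 * n) by lia. reflexivity. }
      assert (E2 : dec (gmul (gmul (s j) y) (s j) = s i) = dec (x = refl_at (S (2 * n)))).
      { apply dec_iff. rewrite (conjg_eq (s j) (s j) y (s i) (s_sq j)). unfold y.
        rewrite (conjg_eq _ _ x _ (gpow_ab_ba n)).
        unfold refl_at. rewrite <- !gmulA, mul_b_gpow_ab. fold c.
        rewrite (gmulA b a). fold c. rewrite (gmulA (gpow c n) c), <- gpowSr, gmulA, <- gpowD.
        replace (S n + n) with (S (2 * n)) by lia. reflexivity. }
      rewrite E1, E2.
      destruct e, (dihedral_parity x (2 * n)), (dec (x = refl_at (2 * n))),
        (dec (x = refl_at (S (2 * n)))); reflexivity.
Qed.

Lemma dihedral_parityD x r n : gpow c n = gone ->
  dihedral_parity x (r + n) = xorb (dihedral_parity x r) (dihedral_parity x n).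
Proof.
  intros Hc. induction r as [|r IH]; [reflexivity|]. simpl. rewrite IH.
  unfold refl_at. rewrite gpowD, Hc, mulg1.
  destruct (dihedral_parity x r), (dihedral_parity x n), (dec (x = gmul (gpow c r) b));
    reflexivity.
Qed.

Lemma rho_gen_relation : m i j <> 0 -> gpow (gmul (rho_gen i) (rho_gen j)) (m i j) = gone.
Proof.
  intros Hij. assert (Hd : gpow d (m i j) = gone) by (apply s_relations; auto).
  assert (Hc : gpow c (m i j) = gone).
  { pose proof (gpow_ab_ba (m i j)) as H. rewrite Hd, gmul1l in H. exact H. }
  apply perm_ext, functional_extensionality. intros [x e].
  rewrite rho_gen_gpow, Hd, Hc, gmul1l, mulg1.
  replace (2 * m i j) with (m i j + m i j) by lia. rewrite (dihedral_parityD _ _ _ Hc).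
  destruct (dihedral_parity x (m i j)), e; reflexivity.
Qed.

End Dihedral.

Lemma exists_rho : exists rho : W -> PermG (W * bool), is_hom rho /\ forall i, rho (s i) = rho_gen i.
Proof.
  destruct (s_universal _ rho_gen rho_gen_relation) as [rho [H _]]. exists rho; exact H.
Qed.

Definition rho : W -> PermG (W * bool) :=
  proj1_sig (constructive_indefinite_description _ exists_rho).

Lemma rho_hom : is_hom rho.
Proof. exact (proj1 (proj2_sig (constructive_indefinite_description _ exists_rho))). Qed.

Lemma rho_s_gen i : rho (s i) = rho_gen i.
Proof. exact (proj2 (proj2_sig (constructive_indefinite_description _ exists_rho)) i). Qed.

(* [word_parity l x] is the parity of the number of positions of [l = l1 ++ i :: l2]
   with [x = ev l2^-1 s_i ev l2], i.e. of the letters whose deletion right-multiplies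
   [ev l] by [x]. *)
Fixpoint word_parity (l : list I) (x : W) : bool :=
  match l with
  | [] => false
  | i :: l' => xorb (word_parity l' x) (dec (x = gmul (gmul (ginv (ev l')) (s i)) (ev l')))
  end.

Lemma rho_word l x e : perm_fun (rho (ev l)) (x, e) =
  (gmul (gmul (ev l) x) (ginv (ev l)), xorb e (word_parity l x)).
Proof.
  induction l as [|i l IH].
  - simpl. rewrite (hom1 _ rho_hom), invg1, gmul1l, mulg1, xorb_false_r. reflexivity.
  - simpl word_eval. rewrite rho_hom, rho_s_gen.
    change (perm_fun (gmul (rho_gen i) (rho (ev l))) (x, e))
      with (rho_s i (perm_fun (rho (ev l)) (x, e))).
    rewrite IH. unfold rho_s. simpl. f_equal.
    + rewrite invMg, s_inv, !gmulA. reflexivity.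
    + rewrite (dec_iff _ _ (conjg_eq _ _ x (s i) (mulgV (ev l)))).
      destruct e, (word_parity l x), (dec _); reflexivity.
Qed.

(* For a reflection [t], [eta w t = true] iff [len (w t) < len w] (Tits' cocycle). *)
Definition eta (w x : W) : bool := snd (perm_fun (rho w) (x, false)).

Lemma eta_word l x : eta (ev l) x = word_parity l x.
Proof. unfold eta. rewrite rho_word. reflexivity. Qed.

Lemma rho_eta w x e : perm_fun (rho w) (x, e) = (gmul (gmul w x) (ginv w), xorb e (eta w x)).
Proof. destruct (words_generate w) as [l <-]. rewrite eta_word. apply rho_word. Qed.

Lemma eta_mul u v x : eta (gmul u v) x = xorb (eta v x) (eta u (gmul (gmul v x) (ginv v))).
Proof.
  unfold eta at 1. rewrite rho_hom.
  change (perm_fun (gmul (rho u) (rho v)) (x, false))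
    with (perm_fun (rho u) (perm_fun (rho v) (x, false))).
  rewrite !rho_eta. reflexivity.
Qed.

Lemma eta1 x : eta gone x = false.
Proof. change gone with (ev []). rewrite eta_word. reflexivity. Qed.

Lemma eta_s i x : eta (s i) x = dec (x = s i).
Proof. unfold eta. rewrite rho_s_gen. reflexivity. Qed.

Lemma eta_inv v y : eta (ginv v) (gmul (gmul v y) (ginv v)) = eta v y.
Proof.
  pose proof (eta_mul (ginv v) v y) as H. rewrite gmulVl, eta1 in H.
  destruct (eta v y), (eta (ginv v) _); simpl in H; congruence.
Qed.

Lemma eta_reflection t : reflection s t -> eta t t = true.
Proof.
  intros Ht. pose proof Ht as [x [i Et]].
  rewrite Et at 1. rewrite eta_mul, invgK.
  assert (E1 : gmul (gmul (ginv x) t) x = s i).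
  { rewrite Et, !gmulA, gmulVl, gmul1l, <- gmulA, gmulVl, mulg1. reflexivity. }
  assert (E2 : eta (ginv x) t = eta x (s i)) by (rewrite Et; apply eta_inv).
  rewrite E1, eta_mul, eta_s, (proj2 (dec_spec _) eq_refl), s_inv, mulgss, E2.
  destruct (eta x (s i)); reflexivity.
Qed.

Lemma eta_mul_reflection w t : reflection s t -> eta (gmul w t) t = negb (eta w t).
Proof.
  intros Ht. rewrite eta_mul, eta_reflection by exact Ht.
  rewrite reflection_sq, gmul1l, (invg_unique _ _ (reflection_sq t Ht)) by exact Ht.
  destruct (eta w t); reflexivity.
Qed.

Lemma word_parity_split l x : word_parity l x = true -> exists l1 i l2,
  l = l1 ++ i :: l2 /\ x = gmul (gmul (ginv (ev l2)) (s i)) (ev l2).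
Proof.
  induction l as [|i l IH]; simpl; [discriminate|]. intros H.
  destruct (word_parity l x).
  - destruct (IH eq_refl) as [l1 [k [l2 [-> Hx]]]]. exists (i :: l1), k, l2. auto.
  - exists [], i, l. split; [reflexivity|exact (proj1 (dec_spec _) H)].
Qed.

Lemma ev_delete l1 i l2 :
  gmul (ev (l1 ++ i :: l2)) (gmul (gmul (ginv (ev l2)) (s i)) (ev l2)) = ev (l1 ++ l2).
Proof.
  rewrite !ev_app. simpl word_eval. rewrite <- !gmulA. f_equal.
  rewrite gmulA, gmulA, mulgK, mulssg. reflexivity.
Qed.

Lemma strong_exchange w t l : reflection s t -> len (gmul w t) < len w -> ev l = w ->
  exists l1 i l2, l = l1 ++ i :: l2 /\ t = gmul (gmul (ginv (ev l2)) (s i)) (ev l2) /\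
    gmul w t = ev (l1 ++ l2).
Proof.
  intros Ht Hlt Hl.
  assert (Hinv : eta w t = true).
  { destruct (eta w t) eqn:He; auto. exfalso.
    pose proof (eta_mul_reflection w t Ht) as H1. rewrite He in H1.
    destruct (reduced_word (gmul w t)) as [l' [H2 H3]].
    rewrite <- H3, eta_word in H1. destruct (word_parity_split _ _ H1) as [l1 [i [l2 [-> Hx]]]].
    pose proof (ev_delete l1 i l2) as H4.
    rewrite <- Hx, H3, <- gmulA, reflection_sq, mulg1 in H4 by exact Ht.
    pose proof (len_word_le (l1 ++ l2)) as H5. rewrite <- H4 in H5.
    rewrite length_app in H2, H5. simpl in H2. lia. }
  rewrite <- Hl, eta_word in Hinv.
  destruct (word_parity_split _ _ Hinv) as [l1 [i [l2 [-> Hx]]]].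
  exists l1, i, l2. repeat split; [exact Hx|]. rewrite <- Hl, Hx. apply ev_delete.
Qed.

Lemma len_mul_s_exchange u t k : reflection s t -> len u < len (gmul u t) ->
  len (gmul (gmul u t) (s k)) < len (gmul u t) -> t <> s k ->
  len (gmul u (s k)) < len (gmul (gmul u t) (s k)).
Proof.
  intros Ht H1 H2 Hne. set (u1 := gmul u t) in *.
  destruct (reduced_word (gmul u1 (s k))) as [l' [Hl' Hev]].
  assert (Hl : ev (l' ++ [k]) = u1) by (rewrite ev_rcons, Hev, mulgss; reflexivity).
  assert (Hu : gmul u1 t = u) by (unfold u1; rewrite <- gmulA, reflection_sq, mulg1; auto).
  assert (Hlt : len (gmul u1 t) < len u1) by (rewrite Hu; exact H1).
  destruct (strong_exchange _ _ _ Ht Hlt Hl) as [l1 [i [l2 [E [Et Eu]]]]].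
  rewrite Hu in Eu.
  destruct l2 as [|x l2'] using rev_ind.
  - apply app_inj_tail in E. destruct E as [-> ->]. simpl in Et.
    rewrite invg1, gmul1l, mulg1 in Et. contradiction.
  - clear IHl2'. rewrite app_comm_cons, app_assoc in E. apply app_inj_tail in E.
    destruct E as [E <-]. rewrite app_assoc, ev_rcons in Eu. rewrite Eu, mulgss.
    pose proof (len_word_le (l1 ++ l2')) as H3. pose proof (len_mul_s u1 k).
    rewrite E, length_app in Hl'. simpl in Hl'. rewrite length_app in H3. lia.
Qed.

Lemma mul_s_conj u t k :
  gmul (gmul u (s k)) (gmul (gmul (s k) t) (s k)) = gmul (gmul u t) (s k).
Proof. rewrite !gmulA, mulgss. reflexivity. Qed.

Lemma ble_conj_s u t k : reflection s t ->
  len (gmul u (s k)) < len (gmul (gmul u t) (s k)) ->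
  ble (gmul u (s k)) (gmul (gmul u t) (s k)).
Proof.
  intros Ht H. rewrite <- mul_s_conj. apply ble_step.
  - apply reflection_conj_s, Ht.
  - rewrite mul_s_conj. exact H.
Qed.

Lemma ble_mul_s_ascent u y k : ble u y ->
  len u < len (gmul u (s k)) -> len y < len (gmul y (s k)) ->
  ble (gmul u (s k)) (gmul y (s k)).
Proof.
  intros H. apply clos_rt_rt1n in H. induction H as [u|u u1 y Hst Hch IH]; intros H1 H2.
  - apply ble_refl.
  - apply clos_rt1n_rt in Hch. destruct Hst as [t [Ht [-> Hl]]].
    destruct (classic (t = s k)) as [->|Hne].
    { apply (ble_trans _ y); [exact Hch|]. apply ble_mul_s, H2. }
    destruct (len_mul_s (gmul u t) k) as [A|A].
    + apply (ble_trans _ (gmul (gmul u t) (s k))); [|apply IH; auto; lia].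
      apply ble_conj_s; [exact Ht|]. pose proof (len_mul_s_le u k). lia.
    + apply (ble_trans _ (gmul (gmul u t) (s k))).
      { apply ble_conj_s; [exact Ht|]. apply len_mul_s_exchange; auto; lia. }
      apply (ble_trans _ (gmul u t)); [apply ble_mul_s_desc; lia|].
      apply (ble_trans _ y); [exact Hch|]. apply ble_mul_s, H2.
Qed.

Lemma ble_mul_s_descent u y k : ble u y -> len (gmul y (s k)) < len y ->
  (len u < len (gmul u (s k)) -> ble u (gmul y (s k))) /\
  (len (gmul u (s k)) < len u -> ble (gmul u (s k)) (gmul y (s k))).
Proof.
  intros H H2. apply clos_rt_rt1n in H. induction H as [u|u u1 y Hst Hch IH].
  { split; intros; [lia|apply ble_refl]. }
  apply clos_rt1n_rt in Hch. destruct Hst as [t [Ht [-> Hl]]].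
  destruct (IH H2) as [IH1 IH2].
  destruct (len_mul_s (gmul u t) k) as [A|A]; split; intros H1.
  - apply (ble_trans _ (gmul u t)); [apply ble_step; auto|]. apply IH1; lia.
  - apply (ble_trans _ u); [apply ble_mul_s_desc, H1|].
    apply (ble_trans _ (gmul u t)); [apply ble_step; auto|]. apply IH1; lia.
  - specialize (IH2 ltac:(lia)).
    destruct (classic (t = s k)) as [->|Hne]; [rewrite mulgss in IH2; exact IH2|].
    apply (ble_trans _ (gmul u (s k))); [apply ble_mul_s, H1|].
    apply (ble_trans _ (gmul (gmul u t) (s k))); [|exact IH2].
    apply ble_conj_s; [exact Ht|]. apply len_mul_s_exchange; auto; lia.
  - specialize (IH2 ltac:(lia)).
    destruct (classic (t = s k)) as [->|Hne]; [lia|].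
    apply (ble_trans _ (gmul (gmul u t) (s k))); [|exact IH2].
    apply ble_conj_s; [exact Ht|]. lia.
Qed.

Lemma lifting_property w x k : ble w x ->
  len w < len (gmul w (s k)) -> len (gmul x (s k)) < len x ->
  ble (gmul w (s k)) x /\ ble w (gmul x (s k)).
Proof.
  intros Hwx Hw Hx. pose proof (proj1 (ble_mul_s_descent w x k Hwx Hx) Hw) as H.
  split; [|exact H].
  rewrite <- (mulgss k x). apply ble_mul_s_ascent; auto. rewrite mulgss. exact Hx.
Qed.

Lemma parabolic_word (J : I -> Prop) z : parabolic s J z -> exists l, Forall J l /\ ev l = z.
Proof.
  induction 1 as [|j Hj|x y _ [l1 [F1 <-]] _ [l2 [F2 <-]]|x _ [l [F <-]]].
  - exists []. auto.
  - exists [j]. split; [auto|apply mulg1].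
  - exists (l1 ++ l2). split; [apply Forall_app; auto|apply ev_app].
  - exists (rev l). split; [apply Forall_rev; auto|apply ev_rev].
Qed.

Lemma ble_parabolic_factor (J : I -> Prop) v x z :
  (forall j, J j -> len v < len (gmul v (s j))) -> parabolic s J z ->
  ble v (gmul x z) -> ble v x.
Proof.
  intros Hv Hz. destruct (parabolic_word J z Hz) as [l [HF <-]]. clear Hz. revert x.
  induction HF as [|j l Hj HF IH]; intros x H.
  - simpl in H. rewrite mulg1 in H. exact H.
  - simpl in H. rewrite gmulA in H. apply IH in H.
    destruct (len_mul_s x j) as [A|A].
    + rewrite <- (mulgss j x). apply (lifting_property _ _ _ H (Hv j Hj)).
      rewrite mulgss. lia.
    + apply (ble_trans _ _ _ H), ble_mul_s_desc. lia.
Qed.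

Lemma parabolic_factorization (J : I -> Prop) y : exists x z,
  y = gmul x z /\ parabolic s J z /\
  (forall j, J j -> ~ len (gmul x (s j)) < len x) /\ ble x y.
Proof.
  remember (len y) as n eqn:Hn. revert y Hn.
  induction n as [n IH] using lt_wf_ind. intros y Hn.
  destruct (classic (exists j, J j /\ len (gmul y (s j)) < len y)) as [[j [Hj Hlt]]|Hno].
  - destruct (IH (len (gmul y (s j))) ltac:(lia) _ eq_refl) as [x [z [E [Hz [Hx Hxy]]]]].
    exists x, (gmul z (s j)). repeat split.
    + rewrite gmulA, <- E, mulgss. reflexivity.
    + apply par_mul; [exact Hz|apply par_gen, Hj].
    + exact Hx.
    + apply (ble_trans _ _ _ Hxy), ble_mul_s_desc, Hlt.
  - exists y, gone. repeat split.
    + symmetry; apply mulg1.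
    + apply par_one.
    + intros j Hj Hlt. apply Hno. eauto.
    + apply ble_refl.
Qed.

Lemma exists_descent x : x <> gone -> exists i, len (gmul x (s i)) < len x.
Proof.
  intros Hx. destruct (reduced_word x) as [l [Hl E]].
  destruct l as [|i l'] using rev_ind.
  - exfalso. apply Hx. symmetry. exact E.
  - exists i. subst x. rewrite ev_rcons, mulgss. pose proof (len_word_le l').
    rewrite ev_rcons, length_app in Hl. simpl in Hl. lia.
Qed.

Lemma annex_mul_s w k : w <> gone ->
  (forall i, in_DR s (gmul w (s k)) i <-> i = k) ->
  forall y, Annex s (gmul w (s k)) y <->
    exists x z, Annex s w x /\ parabolic s (fun j => j <> k) z /\ y = gmul x z.
Proof.
  intros Hw1 HD y. set (v := gmul w (s k)).
  assert (Hwv : len w < len v).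
  { pose proof (proj2 (HD k) eq_refl) as H. unfold in_DR, v in H. rewrite mulgss in H.
    exact H. }
  assert (Hv : forall j, j <> k -> len v < len (gmul v (s j))).
  { intros j Hj. destruct (len_mul_s v j) as [A|A]; [lia|].
    exfalso. apply Hj, HD. unfold in_DR. fold v. lia. }
  split.
  - intros Hy.
    destruct (parabolic_factorization (fun j => j <> k) y) as [x [z [-> [Hz [Hx Hxy]]]]].
    exists x, z. repeat split; [|exact Hz]. intros Hwx.
    destruct (classic (len (gmul x (s k)) < len x)) as [Hk|Hk].
    + apply Hy, (ble_trans _ _ _ (proj1 (lifting_property w x k Hwx Hwv Hk)) Hxy).
    + apply Hw1, ble1. replace gone with x; [exact Hwx|].
      apply NNPP. intros Hx1. destruct (exists_descent x Hx1) as [i Hi].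
      destruct (classic (i = k)) as [->|Hik]; [exact (Hk Hi)|exact (Hx i Hik Hi)].
  - intros [x [z [Hx [Hz ->]]]] Hvy. apply Hx.
    apply (ble_trans _ v); [apply ble_mul_s, Hwv|].
    apply (ble_parabolic_factor _ v x z Hv Hz Hvy).
Qed.

End Coxeter.

(* The hypothesis [~ in_DR s w k] is implied by [in_DR s (gmul w (s k)) k]. *)
Theorem proposition3p14 (W : Group) (I : Type) (s : I -> W) :
  is_coxeter_system W I s ->
  forall (w : W) (k : I),
    w <> gone ->
    ~ in_DR s w k ->
    (forall i, in_DR s (gmul w (s k)) i <-> i = k) ->
    forall y : W,
      Annex s (gmul w (s k)) y <->
      exists x z, Annex s w x /\ parabolic s (fun j => j <> k) z /\ y = gmul x z.
Proof.
  intros [m [[m_diag _] [s_relations s_universal]]] w k Hw _.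
  exact (annex_mul_s W I s m m_diag s_relations s_universal w k Hw).
Qed.
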